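(* As formal power series in $z,q$, $$\sum_{n\geq 1}\sum_{j\geq 0}FD_{j,2}(n)z^jq^n=\frac{q(1-(1-z)q)}{1-2q+(1-z)q^3}=\sum_{n\geq 1}\sum_{j\geq 0}FO_{j,2}(n)z^jq^n .$$
   Context: A partition is a finite nonincreasing sequence of positive integers (its parts); its size is not fixed. The perimeter of a partition with largest part $\alpha$ and $\lambda$ parts is $\alpha+\lambda-1$. $FO_{j,2}(n)$ is the number of partitions of perimeter $n$ having exactly $j$ distinct even part sizes; $FD_{j,2}(n)$ is the number of partitions of perimeter $n$ having exactly $j$ distinct part sizes that each appear at least $2$ times. *)

From mathcomp Require Import all_boot all_order all_algebra.
Set Implicit Arguments. Unset Strict Implicit. Unset Printing Implicit Defensive.
Import GRing.Theory Num.Theory.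

Definition is_partition (s : seq nat) : bool :=
  sorted geq s && all (fun x => 0 < x) s.

Definition largest_part (s : seq nat) : nat := foldr maxn 0 s.

Definition perimeter (s : seq nat) : nat := (largest_part s + size s).-1.

Definition n_distinct_even (s : seq nat) : nat :=
  count (fun x => ~~ odd x) (undup s).

Definition n_distinct_rep2 (s : seq nat) : nat :=
  count (fun x => 1 < count_mem x s) (undup s).

Fixpoint seqs_upto (b l : nat) : seq (seq nat) :=
  match l with
  | 0 => [:: [::]]
  | l'.+1 => [::] :: [seq x :: t | x <- iota 0 b, t <- seqs_upto b l']
  end.

(* For n >= 1, every partition of perimeter n has parts <= n and at most n
   parts, hence occurs (exactly once) in seqs_upto n.+1 n. *)
Definition partitions_perim (n : nat) : seq (seq nat) :=
  [seq s <- seqs_upto n.+1 n | is_partition s && (perimeter s == n)].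

Definition FO2 (j n : nat) : nat :=
  count (fun s => n_distinct_even s == j) (partitions_perim n).
Definition FD2 (j n : nat) : nat :=
  count (fun s => n_distinct_rep2 s == j) (partitions_perim n).

Local Open Scope ring_scope.

(* coefficient of z^i q^k in 1 - 2q + (1-z) q^3 *)
Definition denom_coef (k i : nat) : int :=
  match k, i with
  | 0, 0 => 1 | 1, 0 => -2 | 3, 0 => 1 | 3, 1 => -1 | _, _ => 0 end.

(* coefficient of z^j q^n in q (1 - (1-z) q) = q - q^2 + z q^2 *)
Definition numer_coef (n j : nat) : int :=
  match n, j with
  | 1, 0 => 1 | 2, 0 => -1 | 2, 1 => 1 | _, _ => 0 end.

(* The formal power series sum_{n,j} a n j z^j q^n equals
   q(1-(1-z)q)/(1-2q+(1-z)q^3), i.e. (since the denominator is invertible)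
   series * denominator = numerator, coefficientwise. *)
Definition gf_identity (a : nat -> nat -> int) : Prop :=
  forall n j : nat,
    \sum_(k < n.+1) \sum_(i < j.+1) denom_coef k i * a (n - k)%N (j - i)%N
    = numer_coef n j.

(* coefficient array of sum_{n>=1} sum_{j>=0} F j n z^j q^n *)
Definition coef_array (F : nat -> nat -> nat) : nat -> nat -> int :=
  fun n j => if n is 0 then 0 else (F j n)%:Z.

From mathcomp Require Import all_boot all_order all_algebra.
From mathcomp Require Import zify ring.
Set Implicit Arguments. Unset Strict Implicit. Unset Printing Implicit Defensive.
Import GRing.Theory.

(* Classify a partition of perimeter n+1 with largest part x by its second part y.
   If x = y, deleting one copy of x leaves a partition of perimeter n; if x = y + 1,
   deleting x leaves one of perimeter n - 1; otherwise (apart from [1]) x - 1 is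
   still a strictly largest part, and lowering x by one leaves a partition of
   perimeter n.  This enumerates the partitions of each perimeter recursively.
   Following how the three moves change the number of repeated part sizes (resp.
   of even part sizes) gives linear recurrences for the generating polynomials,
   refined by whether the largest part is repeated (resp. by its parity);
   eliminating the refinements yields S n - 2 S (n-1) + (1-z) S (n-3) = [q^n] of
   q(1-(1-z)q), i.e. the claimed identities coefficientwise. *)

Lemma eq_big_seq_cond (R : Type) (idx : R) (op : R -> R -> R) (I : eqType) (r : seq I)
    (P1 P2 : pred I) (F1 F2 : I -> R) :
  {in r, P1 =1 P2} -> {in r, forall i, P2 i -> F1 i = F2 i} ->
  \big[op/idx]_(i <- r | P1 i) F1 i = \big[op/idx]_(i <- r | P2 i) F2 i.
Proof.
move=> eqP12 eqF12; rewrite big_seq_cond [RHS]big_seq_cond.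
apply: eq_big => [i|i /andP [i_r]]; last by rewrite eqP12 //; exact: eqF12.
by case: (boolP (i \in r)) => // i_r; rewrite eqP12.
Qed.

Arguments eq_big_seq_cond {R idx op I r} P1 P2 {F1} F2.

Lemma has_mem_tagged (T : eqType) (tag : T -> nat) i j (s1 s2 : seq T) :
  all (fun x => tag x == i) s1 -> all (fun x => tag x == j) s2 -> i != j ->
  has (mem s1) s2 = false.
Proof.
move=> /allP s1i /allP s2j neq_ij; apply/hasP => -[x /s2j /eqP tag_xj /s1i /eqP tag_xi].
by rewrite -tag_xi -tag_xj eqxx in neq_ij.
Qed.

Lemma mem_seqs_upto b l s :
  (s \in seqs_upto b l) = (size s <= l) && all (fun x => x < b) s.
Proof.
elim: l s => [|l IHl] [|x t] //=; rewrite in_cons /=.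
apply/allpairsP/idP => [[[y u]] /= [+ + [-> ->]]|/andP [st /andP [xb tb]]].
  by rewrite mem_iota IHl ltnS => /= -> /andP [-> ->].
by exists (x, t); rewrite mem_iota IHl; rewrite ltnS in st; rewrite st xb tb.
Qed.

Lemma uniq_seqs_upto b l : uniq (seqs_upto b l).
Proof.
elim: l => [|l IHl] //=; apply/andP; split.
  by apply/allpairsP => -[[y u]] [].
by apply: allpairs_uniq => [||[x1 t1] [x2 t2] _ _ [-> ->]] //; exact: iota_uniq.
Qed.

Lemma is_partition_cons x t :
  is_partition (x :: t) = [&& 0 < x, head x t <= x & is_partition t].
Proof.
rewrite /is_partition /=; case: t => [|y t] /=; first by rewrite leqnn !andbT.
by rewrite andbA andbAC -!andbA; do !bool_congr.
Qed.

Lemma partition_cons_le x t : is_partition (x :: t) -> all (fun y => y <= x) t.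
Proof. by case/andP => /= /(order_path_min (rev_trans leq_trans)). Qed.

Lemma perimeter_cons x t : is_partition (x :: t) -> perimeter (x :: t) = x + size t.
Proof.
move/partition_cons_le => le_t_x; rewrite /perimeter /largest_part /= addnS.
suff /maxn_idPl -> : foldr maxn 0 t <= x by [].
by elim: t le_t_x => //= y t IHt /andP [le_yx /IHt]; rewrite geq_max le_yx.
Qed.

Lemma partition_cons_gt0 x t : is_partition (x :: t) -> 0 < x.
Proof. by case/andP => _ /andP []. Qed.

Definition top_once (s : seq nat) : bool := if s is x :: t then x \notin t else false.
Definition bump_top (s : seq nat) : seq nat := if s is x :: t then x.+1 :: t else [::].
Definition cons_succ_head (t : seq nat) : seq nat := (head 0 t).+1 :: t.
Definition cons_head (t : seq nat) : seq nat := head 0 t :: t.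

Fixpoint perim_parts (n : nat) : seq (seq nat) :=
  if n is m.+1 then
    (if m is 0 then [:: [:: 1]] else [::])
    ++ map bump_top (filter top_once (perim_parts m))
    (* [perim_parts m.-1], spelled out so that the recursion is structural *)
    ++ map cons_succ_head (if m is k.+1 then perim_parts k else [::])
    ++ map cons_head (perim_parts m)
  else [::].

Lemma perim_partsS m :
  perim_parts m.+1 =
    (if m is 0 then [:: [:: 1]] else [::])
    ++ map bump_top (filter top_once (perim_parts m))
    ++ map cons_succ_head (perim_parts m.-1)
    ++ map cons_head (perim_parts m).
Proof. by case: m. Qed.

Definition perim_partition (n : nat) (s : seq nat) : bool :=
  [&& is_partition s, perimeter s == n & s != [::]].

Lemma perim_partition_bump_top n t :
  perim_partition n t -> top_once t -> perim_partition n.+1 (bump_top t).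
Proof.
case: t => [|x t] /and3P [pt /eqP <- _] //= x_notin_t.
have pt' : is_partition (x.+1 :: t).
  move: pt; rewrite !is_partition_cons => /and3P [_ le_hx ->].
  by rewrite andbT; case: t {x_notin_t} le_hx => //= y _ /leqW.
by rewrite /perim_partition pt' !perimeter_cons // addSn eqxx.
Qed.

Lemma perim_partition_cons_succ_head n t :
  perim_partition n t -> perim_partition n.+2 (cons_succ_head t).
Proof.
case: t => [|x t] /and3P [pt /eqP <- _] //.
have pt' : is_partition (cons_succ_head (x :: t)) by rewrite is_partition_cons /= leqnSn.
by rewrite /perim_partition pt' !perimeter_cons //= addSn addnS eqxx.
Qed.

Lemma perim_partition_cons_head n t :
  perim_partition n t -> perim_partition n.+1 (cons_head t).
Proof.
case: t => [|x t] /and3P [pt /eqP <- _] //.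
have pt' : is_partition (cons_head (x :: t)).
  by rewrite /= is_partition_cons /= leqnn pt (partition_cons_gt0 pt).
by rewrite /perim_partition pt' !perimeter_cons //= addnS eqxx.
Qed.

Lemma perim_parts_sound n s : s \in perim_parts n -> perim_partition n s.
Proof.
elim/ltn_ind: n s => -[|m] // IHn s; rewrite perim_partsS !mem_cat.
have IHm := IHn m (ltnSn m).
case/or4P => [|/mapP [t]|/mapP [t]|/mapP [t]].
- by case: m {IHn IHm} => //; rewrite inE => /eqP ->.
- by rewrite mem_filter => /andP [top_t /IHm pt] ->; exact: perim_partition_bump_top.
- case: m {IHm} IHn => //= k IHn /(IHn k (ltnW (ltnSn _))) pt ->.
  exact: perim_partition_cons_succ_head.
- by move=> /IHm pt ->; exact: perim_partition_cons_head.
Qed.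

Lemma perim_parts_complete n s : perim_partition n s -> s \in perim_parts n.
Proof.
elim/ltn_ind: n s => n IHn [|x t] /and3P [ps /eqP per _] //.
rewrite perimeter_cons // in per.
case: n IHn per => [|m] IHn per; first by have := partition_cons_gt0 ps; lia.
have IHm s : perim_partition m s -> s \in perim_parts m := IHn m (ltnSn m) s.
rewrite perim_partsS !mem_cat; apply/or4P.
case: t ps per => [|y t] ps /= per.
  rewrite addn0 in per; rewrite per.
  case: m {IHn} IHm per => [|k] IHm _; first by apply: Or41; rewrite inE.
  apply: Or42; apply/mapP; exists [:: k.+1] => //.
  by rewrite mem_filter IHm // /perim_partition perimeter_cons //= addn0 eqxx.
move: (ps); rewrite is_partition_cons /= => /and3P [_ le_yx pt].
have [exy|ne_xy] := eqVneq x y.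
  apply: Or44; apply/mapP; exists (y :: t); last by rewrite exy.
  by apply: IHm; rewrite /perim_partition pt perimeter_cons //= andbT; apply/eqP; lia.
have [exy1|ne_xy1] := eqVneq x y.+1.
  apply: Or43; apply/mapP; exists (y :: t); last by rewrite exy1.
  apply: (IHn m.-1); first lia.
  by rewrite /perim_partition pt perimeter_cons //= andbT; apply/eqP; lia.
have lt_yx : y.+1 < x by lia.
have px' : is_partition (x.-1 :: y :: t) by rewrite is_partition_cons /= pt andbT; lia.
apply: Or42; apply/mapP; exists (x.-1 :: y :: t); last by rewrite /= (ltn_predK lt_yx).
rewrite mem_filter /= inE negb_or -andbA; apply/and3P; split; first lia.
  by apply/negP => /(allP (partition_cons_le pt)); lia.
by apply: IHm; rewrite /perim_partition px' perimeter_cons //=; apply/eqP; lia.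
Qed.

Definition perim_block (s : seq nat) : nat :=
  if s is x :: t then
    if t is y :: _ then (if x == y then 3 else if x == y.+1 then 2 else 1)
    else (if 1 < x then 1 else 0)
  else 0.

Lemma perim_parts_uniq n : uniq (perim_parts n).
Proof.
elim/ltn_ind: n => -[|m] // IHn; have IHm := IHn m (ltnSn m).
have uniq0 : uniq (if m is 0 then [:: [:: 1]] else [::]) by case: m {IHn IHm}.
have tag0 : all (fun s => perim_block s == 0) (if m is 0 then [:: [:: 1]] else [::]).
  by case: m {IHn IHm uniq0}.
have tag1 : all (fun s => perim_block s == 1) (map bump_top (filter top_once (perim_parts m))).
  apply/allP => s /mapP [t]; rewrite mem_filter => /andP [top_t /perim_parts_sound pt] ->.
  case: t top_t pt => [|x [|y t]] // x_notin_t /and3P [pt _ _] /=.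
    by have := partition_cons_gt0 pt; case: x {pt x_notin_t}.
  move: x_notin_t pt; rewrite /= inE negb_or is_partition_cons /=.
  move=> /andP [ne_xy _] /and3P [_ le_yx _].
  by rewrite ifN ?ifN //; lia.
have tag2 : all (fun s => perim_block s == 2) (map cons_succ_head (perim_parts m.-1)).
  apply/allP => s /mapP [[|y t] /perim_parts_sound /and3P [_ _ //] _ ->] /=.
  by rewrite ifN ?eqxx //; lia.
have tag3 : all (fun s => perim_block s == 3) (map cons_head (perim_parts m)).
  by apply/allP => s /mapP [[|y t] /perim_parts_sound /and3P [_ _ //] _ ->] /=; rewrite eqxx.
have uniq1 : uniq (map bump_top (filter top_once (perim_parts m))).
  by rewrite map_inj_uniq ?filter_uniq // => -[|x s] [|y t] // [-> ->].
have uniq2 : uniq (map cons_succ_head (perim_parts m.-1)).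
  have uniq_pred : uniq (perim_parts m.-1) by apply: IHn; lia.
  by rewrite map_inj_uniq // => s t [_ ->].
have uniq3 : uniq (map cons_head (perim_parts m)) by rewrite map_inj_uniq // => s t [_ ->].
rewrite perim_partsS !cat_uniq !has_cat uniq0 uniq1 uniq2 uniq3.
by rewrite (has_mem_tagged tag0 tag1 isT) (has_mem_tagged tag0 tag2 isT)
  (has_mem_tagged tag0 tag3 isT) (has_mem_tagged tag1 tag2 isT)
  (has_mem_tagged tag1 tag3 isT) (has_mem_tagged tag2 tag3 isT).
Qed.

(* [n > 0] is needed: [partitions_perim 0] holds the empty partition. *)
Lemma perm_perim_parts n : 0 < n -> perm_eq (perim_parts n) (partitions_perim n).
Proof.
move=> n_gt0; apply: uniq_perm; rewrite ?filter_uniq ?uniq_seqs_upto ?perim_parts_uniq //.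
move=> s; rewrite mem_filter; apply/idP/idP.
  move/perim_parts_sound; case: s => [|x t] /and3P [ps /eqP per _] //.
  rewrite ps per eqxx mem_seqs_upto /=; rewrite perimeter_cons // in per.
  have x_gt0 := partition_cons_gt0 ps; have le_t_x := allP (partition_cons_le ps).
  apply/and3P; split; [lia | lia | apply/allP => y /le_t_x; lia].
case/andP => /andP [ps per] _; apply: perim_parts_complete.
by rewrite /perim_partition ps per; apply: contraTneq per => ->; case: n n_gt0.
Qed.

Lemma n_distinct_rep2_cons_notin x t :
  x \notin t -> n_distinct_rep2 (x :: t) = n_distinct_rep2 t.
Proof.
move=> x_notin_t; rewrite /n_distinct_rep2 /= (negbTE x_notin_t) /= eqxx.
have -> : count_mem x t = 0 by apply/count_memPn.
apply: eq_in_count => y; rewrite mem_undup /= => y_in_t.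
by rewrite (_ : (x == y) = false) //; apply: contraNF x_notin_t => /eqP ->.
Qed.

Lemma n_distinct_rep2_cons_in x t : x \in t ->
  n_distinct_rep2 (x :: t) = n_distinct_rep2 t + (count_mem x t == 1).
Proof.
move=> x_in_t; rewrite /n_distinct_rep2 /= x_in_t.
have x_in_ut : x \in undup t by rewrite mem_undup.
rewrite !(permP (perm_to_rem x_in_ut)) /= eqxx rem_filter ?undup_uniq //.
have -> : count (fun y => 1 < (x == y) + count_mem y t) [seq y <- undup t | predC1 x y]
        = count (fun y => 1 < count_mem y t) [seq y <- undup t | predC1 x y].
  apply: eq_in_count => y; rewrite mem_filter /= => /andP [/negbTE ne_yx _].
  by rewrite eq_sym ne_yx.
have : 0 < count_mem x t by rewrite -has_count has_pred1.
by case: (count_mem x t) => [|[|c]] //= _; rewrite ?addn0 // addnC.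
Qed.

Lemma n_distinct_even_cons_notin x t :
  x \notin t -> n_distinct_even (x :: t) = ~~ odd x + n_distinct_even t.
Proof. by move=> x_notin_t; rewrite /n_distinct_even /= (negbTE x_notin_t). Qed.

Lemma n_distinct_even_cons_in x t :
  x \in t -> n_distinct_even (x :: t) = n_distinct_even t.
Proof. by move=> x_in_t; rewrite /n_distinct_even /= x_in_t. Qed.

Lemma bump_top_stats k t : t \in perim_parts k -> top_once t ->
  [/\ top_once (bump_top t), head 0 (bump_top t) = (head 0 t).+1,
      n_distinct_rep2 (bump_top t) = n_distinct_rep2 t,
      behead (bump_top t) = behead t
    & n_distinct_even (bump_top t) = ~~ odd (head 0 t).+1 + n_distinct_even (behead t)].
Proof.
case: t => [|x t] /perim_parts_sound /and3P [pt _ _] //= x_notin_t.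
have Sx_notin_t : x.+1 \notin t.
  by apply/negP => /(allP (partition_cons_le pt)); rewrite ltnn.
by rewrite Sx_notin_t !n_distinct_rep2_cons_notin // n_distinct_even_cons_notin.
Qed.

Lemma cons_succ_head_stats k t : t \in perim_parts k ->
  [/\ top_once (cons_succ_head t), n_distinct_rep2 (cons_succ_head t) = n_distinct_rep2 t
    & n_distinct_even (cons_succ_head t) = ~~ odd (head 0 t).+1 + n_distinct_even t].
Proof.
case: t => [|x t] /perim_parts_sound /and3P [pt _ _] //=.
have Sx_notin_xt : x.+1 \notin x :: t.
  by rewrite inE gtn_eqF //=; apply/negP => /(allP (partition_cons_le pt)); rewrite ltnn.
by rewrite Sx_notin_xt n_distinct_rep2_cons_notin // n_distinct_even_cons_notin.
Qed.

Lemma cons_head_stats k t : t \in perim_parts k ->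
  [/\ top_once (cons_head t) = false,
      n_distinct_rep2 (cons_head t) = n_distinct_rep2 t + top_once t
    & n_distinct_even (cons_head t) = n_distinct_even t].
Proof.
case: t => [|x t] /perim_parts_sound /and3P [pt _ _] //=.
rewrite mem_head n_distinct_rep2_cons_in ?mem_head // n_distinct_even_cons_in ?mem_head //.
by split => //; congr (_ + _); rewrite /= eqxx add1n eqSS eqn0Ngt -has_count has_pred1.
Qed.

Local Open Scope ring_scope.

Lemma big_ord_trunc (R : nmodType) (F : nat -> R) m N : (N <= m)%N ->
  (forall k, (N <= k)%N -> F k = 0) -> \sum_(k < m) F k = \sum_(k < N) F k.
Proof.
move=> le_Nm F_vanish; rewrite -(subnKC le_Nm) big_split_ord /=.
by rewrite [X in _ + X]big1 ?addr0 // => k _; apply: F_vanish; exact: leq_addr.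
Qed.

Lemma coef_sum_Xn (T : Type) (l : seq T) (f : T -> nat) j :
  (\sum_(s <- l) 'X^(f s) : {poly int})`_j = (count (fun s => f s == j) l)%:Z.
Proof.
elim: l => [|s l IHl]; first by rewrite big_nil coef0.
by rewrite big_cons coefD IHl coefXn /= [j == _]eq_sym PoszD; case: (f s == j).
Qed.

Lemma big_perim_partsS (R : nmodType) (P : pred (seq nat)) (F : seq nat -> R) m :
  \sum_(s <- perim_parts m.+1 | P s) F s =
    (if m is 0 then (if P [:: 1%N] then F [:: 1%N] else 0) else 0)
  + \sum_(t <- perim_parts m | top_once t && P (bump_top t)) F (bump_top t)
  + \sum_(t <- perim_parts m.-1 | P (cons_succ_head t)) F (cons_succ_head t)
  + \sum_(t <- perim_parts m | P (cons_head t)) F (cons_head t).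
Proof.
rewrite perim_partsS !big_cat !big_map big_filter_cond -!addrA /=.
congr (_ + (_ + (_ + _))).
by case: m => [|m] /=; rewrite ?big_nil // big_cons big_nil; case: (P _); rewrite ?addr0.
Qed.

Definition gfD_once n : {poly int} :=
  \sum_(s <- perim_parts n | top_once s) 'X^(n_distinct_rep2 s).
Definition gfD_rep n : {poly int} :=
  \sum_(s <- perim_parts n | ~~ top_once s) 'X^(n_distinct_rep2 s).

Lemma gfD_once_rec m :
  gfD_once m.+1 = (m == 0)%:R + gfD_once m + (gfD_once m.-1 + gfD_rep m.-1).
Proof.
rewrite {1}/gfD_once big_perim_partsS.
rewrite (eq_big_seq_cond (fun t => top_once t && top_once (bump_top t)) top_once
    (fun t => 'X^(n_distinct_rep2 t))); first last.
- by move=> t t_in top_t; case: (bump_top_stats t_in top_t) => _ _ ->.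
- by move=> t t_in; case top_t: (top_once t) => //; case: (bump_top_stats t_in top_t) => ->.
rewrite (eq_big_seq_cond (fun t => top_once (cons_succ_head t)) predT
    (fun t => 'X^(n_distinct_rep2 t))); first last.
- by move=> t t_in _; case: (cons_succ_head_stats t_in) => _ ->.
- by move=> t t_in; case: (cons_succ_head_stats t_in) => ->.
rewrite (eq_big_seq_cond (fun t => top_once (cons_head t)) pred0
    (fun t => 'X^(n_distinct_rep2 t))) //; last first.
  by move=> t t_in; case: (cons_head_stats t_in) => ->.
rewrite big_pred0_eq addr0 -/(gfD_once m) (bigID top_once) /=; congr (_ + _ + _).
by case: m => [|m] //=; rewrite expr0.
Qed.

Lemma gfD_rep_rec m : gfD_rep m.+1 = gfD_rep m + 'X * gfD_once m.
Proof.
rewrite {1}/gfD_rep big_perim_partsS.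
rewrite (eq_big_seq_cond (fun t => top_once t && ~~ top_once (bump_top t)) pred0
    (fun t => 'X^(n_distinct_rep2 t))) //; last first.
  move=> t t_in; case top_t: (top_once t) => //=.
  by case: (bump_top_stats t_in top_t) => ->.
rewrite (eq_big_seq_cond (fun t => ~~ top_once (cons_succ_head t)) pred0
    (fun t => 'X^(n_distinct_rep2 t))) //; last first.
  by move=> t t_in; case: (cons_succ_head_stats t_in) => ->.
rewrite (eq_big_seq_cond (fun t => ~~ top_once (cons_head t)) predT
    (fun t => 'X^(n_distinct_rep2 t + top_once t))); first last.
- by move=> t t_in _; case: (cons_head_stats t_in) => _ ->.
- by move=> t t_in; case: (cons_head_stats t_in) => ->.
rewrite !big_pred0_eq (bigID top_once) /= big_distrr /=.
have -> : (if m is 0 then 0 else 0) = 0 :> {poly int} by case: m.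
rewrite !add0r addrC; congr (_ + _).
  by apply: eq_bigr => t /negbTE ->; rewrite addn0.
by apply: eq_bigr => t ->; rewrite addn1 exprS.
Qed.

Definition gfO_even n : {poly int} :=
  \sum_(s <- perim_parts n | ~~ odd (head 0%N s)) 'X^(n_distinct_even s).
Definition gfO_odd n : {poly int} :=
  \sum_(s <- perim_parts n | odd (head 0%N s)) 'X^(n_distinct_even s).
(* Weighted by the parts below the largest one: [bump_top] flips the parity of the largest
   part, which would otherwise call for a division by ['X]. *)
Definition gfO_once_even n : {poly int} :=
  \sum_(s <- perim_parts n | top_once s && ~~ odd (head 0%N s))
    'X^(n_distinct_even (behead s)).
Definition gfO_once_odd n : {poly int} :=
  \sum_(s <- perim_parts n | top_once s && odd (head 0%N s))
    'X^(n_distinct_even (behead s)).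

Lemma gfO_even_rec m :
  gfO_even m.+1 = 'X * gfO_once_odd m + 'X * gfO_odd m.-1 + gfO_even m.
Proof.
rewrite {1}/gfO_even big_perim_partsS.
rewrite (eq_big_seq_cond (fun t => top_once t && ~~ odd (head 0%N (bump_top t)))
    (fun t => top_once t && odd (head 0%N t)) (fun t => 'X * 'X^(n_distinct_even (behead t))));
    first last.
- move=> t t_in /andP [top_t odd_t]; case: (bump_top_stats t_in top_t) => _ _ _ _ ->.
  by rewrite /= negbK odd_t add1n exprS.
- move=> t t_in; case top_t: (top_once t) => //=.
  by case: (bump_top_stats t_in top_t) => _ -> /=; rewrite negbK.
rewrite (eq_big_seq_cond (fun t => ~~ odd (head 0%N (cons_succ_head t)))
    (fun t => odd (head 0%N t)) (fun t => 'X * 'X^(n_distinct_even t))); first last.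
- move=> t t_in odd_t; case: (cons_succ_head_stats t_in) => _ _ ->.
  by rewrite /= negbK odd_t add1n exprS.
- by move=> t t_in /=; rewrite negbK.
rewrite (eq_big_seq_cond (fun t => ~~ odd (head 0%N (cons_head t)))
    (fun t => ~~ odd (head 0%N t)) (fun t => 'X^(n_distinct_even t))) //; last first.
  by move=> t t_in _; case: (cons_head_stats t_in) => _ _ ->.
rewrite -!big_distrr /= -/(gfO_even m) -/(gfO_odd m.-1) -/(gfO_once_odd m).
by case: m => [|m] /=; rewrite add0r.
Qed.

Lemma gfO_odd_rec m :
  gfO_odd m.+1 = (m == 0)%:R + gfO_once_even m + gfO_even m.-1 + gfO_odd m.
Proof.
rewrite {1}/gfO_odd big_perim_partsS.
rewrite (eq_big_seq_cond (fun t => top_once t && odd (head 0%N (bump_top t)))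
    (fun t => top_once t && ~~ odd (head 0%N t)) (fun t => 'X^(n_distinct_even (behead t))));
    first last.
- move=> t t_in /andP [top_t even_t]; case: (bump_top_stats t_in top_t) => _ _ _ _ ->.
  by rewrite /= (negbTE even_t) add0n.
- move=> t t_in; case top_t: (top_once t) => //=.
  by case: (bump_top_stats t_in top_t) => _ ->.
rewrite (eq_big_seq_cond (fun t => odd (head 0%N (cons_succ_head t)))
    (fun t => ~~ odd (head 0%N t)) (fun t => 'X^(n_distinct_even t))) //; last first.
  move=> t t_in even_t; case: (cons_succ_head_stats t_in) => _ _ ->.
  by rewrite /= (negbTE even_t) add0n.
rewrite (eq_big_seq_cond (fun t => odd (head 0%N (cons_head t)))
    (fun t => odd (head 0%N t)) (fun t => 'X^(n_distinct_even t))) //; last first.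
  by move=> t t_in _; case: (cons_head_stats t_in) => _ _ ->.
rewrite -/(gfO_even m.-1) -/(gfO_odd m) -/(gfO_once_even m).
by case: m => [|m] /=; rewrite ?expr0.
Qed.

Lemma gfO_once_even_rec m : gfO_once_even m.+1 = gfO_once_odd m + gfO_odd m.-1.
Proof.
rewrite {1}/gfO_once_even big_perim_partsS.
rewrite (eq_big_seq_cond
    (fun t => top_once t && (top_once (bump_top t) && ~~ odd (head 0%N (bump_top t))))
    (fun t => top_once t && odd (head 0%N t)) (fun t => 'X^(n_distinct_even (behead t))));
    first last.
- by move=> t t_in /andP [top_t _]; case: (bump_top_stats t_in top_t) => _ _ _ ->.
- move=> t t_in; case top_t: (top_once t) => //=.
  by case: (bump_top_stats t_in top_t) => -> -> /=; rewrite negbK.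
rewrite (eq_big_seq_cond
    (fun t => top_once (cons_succ_head t) && ~~ odd (head 0%N (cons_succ_head t)))
    (fun t => odd (head 0%N t)) (fun t => 'X^(n_distinct_even t))) //; last first.
  by move=> t t_in; case: (cons_succ_head_stats t_in) => -> _ _ /=; rewrite negbK.
rewrite (eq_big_seq_cond (fun t => top_once (cons_head t) && ~~ odd (head 0%N (cons_head t)))
    pred0 (fun t => 'X^(n_distinct_even t))) //; last first.
  by move=> t t_in; case: (cons_head_stats t_in) => ->.
rewrite big_pred0_eq addr0 -/(gfO_odd m.-1) -/(gfO_once_odd m).
by case: m => [|m] /=; rewrite add0r.
Qed.

Lemma gfO_once_odd_rec m :
  gfO_once_odd m.+1 = (m == 0)%:R + gfO_once_even m + gfO_even m.-1.
Proof.
rewrite {1}/gfO_once_odd big_perim_partsS.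
rewrite (eq_big_seq_cond
    (fun t => top_once t && (top_once (bump_top t) && odd (head 0%N (bump_top t))))
    (fun t => top_once t && ~~ odd (head 0%N t)) (fun t => 'X^(n_distinct_even (behead t))));
    first last.
- by move=> t t_in /andP [top_t _]; case: (bump_top_stats t_in top_t) => _ _ _ ->.
- move=> t t_in; case top_t: (top_once t) => //=.
  by case: (bump_top_stats t_in top_t) => -> ->.
rewrite (eq_big_seq_cond
    (fun t => top_once (cons_succ_head t) && odd (head 0%N (cons_succ_head t)))
    (fun t => ~~ odd (head 0%N t)) (fun t => 'X^(n_distinct_even t))) //; last first.
  by move=> t t_in; case: (cons_succ_head_stats t_in) => -> _ _.
rewrite (eq_big_seq_cond (fun t => top_once (cons_head t) && odd (head 0%N (cons_head t)))
    pred0 (fun t => 'X^(n_distinct_even t))) //; last first.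
  by move=> t t_in; case: (cons_head_stats t_in) => ->.
rewrite big_pred0_eq addr0 -/(gfO_even m.-1) -/(gfO_once_even m).
by case: m => [|m] /=; rewrite ?expr0.
Qed.

Definition gf_numer (R : nzRingType) (z : R) (n : nat) : R :=
  match n with 1 => 1 | 2 => z - 1 | _ => 0 end.

Definition gf_recurrence (R : nzRingType) (z : R) (S : nat -> R) : Prop :=
  forall n, S n - 2%:R * S (n - 1)%N + (1 - z) * S (n - 3)%N = gf_numer z n.

Section Elimination.
Variables (R : comNzRingType) (z : R).

Lemma gf_recurrence_once_rep (U V : nat -> R) :
  U 0%N = 0 -> V 0%N = 0 ->
  (forall m, U m.+1 = (m == 0%N)%:R + U m + (U m.-1 + V m.-1)) ->
  (forall m, V m.+1 = V m + z * U m) ->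
  gf_recurrence z (fun n => U n + V n).
Proof.
move=> U0 V0 recU recV [|[|[|[|n]]]] /=; rewrite ?subSS ?sub0n ?subn0.
- by rewrite U0 V0 /=; ring.
- by rewrite (recU 0%N) (recV 0%N) U0 V0 /=; ring.
- by rewrite (recU 1%N) (recV 1%N) (recU 0%N) (recV 0%N) U0 V0 /=; ring.
- rewrite (recU 2%N) (recV 2%N) (recU 1%N) (recV 1%N) (recU 0%N) (recV 0%N).
  by rewrite U0 V0 /=; ring.
rewrite (recU n.+3) (recV n.+3) (recU n.+2) (recV n.+2) (recU n.+1) (recV n.+1).
by rewrite /=; ring.
Qed.

Lemma gf_recurrence_parity (E O Ee Eo : nat -> R) :
  E 0%N = 0 -> O 0%N = 0 -> Ee 0%N = 0 -> Eo 0%N = 0 ->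
  (forall m, E m.+1 = z * Eo m + z * O m.-1 + E m) ->
  (forall m, O m.+1 = (m == 0%N)%:R + Ee m + E m.-1 + O m) ->
  (forall m, Ee m.+1 = Eo m + O m.-1) ->
  (forall m, Eo m.+1 = (m == 0%N)%:R + Ee m + E m.-1) ->
  gf_recurrence z (fun n => E n + O n).
Proof.
move=> E0 O0 Ee0 Eo0 recE recO recEe recEo [|[|[|[|n]]]] /=; rewrite ?subSS ?sub0n ?subn0.
- by rewrite E0 O0 /=; ring.
- by rewrite (recE 0%N) (recO 0%N) E0 O0 Ee0 Eo0 /=; ring.
- rewrite (recE 1%N) (recO 1%N) (recEe 0%N) (recEo 0%N) (recE 0%N) (recO 0%N).
  by rewrite E0 O0 Ee0 Eo0 /=; ring.
- rewrite (recE 2%N) (recO 2%N) (recEe 1%N) (recEo 1%N) (recE 1%N) (recO 1%N).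
  by rewrite (recEe 0%N) (recEo 0%N) (recE 0%N) (recO 0%N) E0 O0 Ee0 Eo0 /=; ring.
rewrite (recE n.+3) (recO n.+3) (recEe n.+2) (recEo n.+2) (recE n.+2) (recO n.+2).
rewrite (recEe n.+1) (recEo n.+1) (recE n.+1) (recO n.+1).
by rewrite (recEe n) (recEo n) (recE n) (recO n) /=; ring.
Qed.

End Elimination.

Definition denom_poly (k : nat) : {poly int} :=
  match k with 0 => 1 | 1 => - 2%:R | 3 => 1 - 'X | _ => 0 end.

Lemma coef_denom_poly k i : (denom_poly k)`_i = denom_coef k i.
Proof.
by case: k => [|[|[|[|k]]]]; case: i => [|[|i]];
  rewrite /= ?coef0 ?coefN ?coefB ?coefMn ?coef1 ?coefX.
Qed.

Lemma coef_gf_numer n j : (gf_numer 'X n)`_j = numer_coef n j.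
Proof.
by case: n => [|[|[|n]]]; case: j => [|[|j]]; rewrite /= ?coef0 ?coefB ?coef1 ?coefX.
Qed.

Lemma gf_identity_of_recurrence (a : nat -> nat -> int) (S : nat -> {poly int}) :
  S 0%N = 0 -> (forall n j, a n j = (S n)`_j) -> gf_recurrence 'X S -> gf_identity a.
Proof.
move=> S0 aS recS n j; pose F k := denom_poly k * S (n - k)%N.
have -> : \sum_(k < n.+1) \sum_(i < j.+1) denom_coef k i * a (n - k)%N (j - i)%N
          = (\sum_(k < n.+1) F k)`_j.
  rewrite coef_sum; apply: eq_bigr => k _; rewrite coefM.
  by apply: eq_bigr => i _; rewrite coef_denom_poly aS.
have F_vanish k : (minn n.+1 4 <= k)%N -> F k = 0.
  rewrite geq_min => /orP [lt_nk|]; last by case: k => [|[|[|[|k]]]] //; rewrite /F mul0r.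
  by rewrite /F (_ : (n - k = 0)%N) ?S0 ?mulr0 //; lia.
rewrite (big_ord_trunc (geq_minl n.+1 4) F_vanish).
rewrite -(big_ord_trunc (geq_minr n.+1 4) F_vanish) -coef_gf_numer -recS.
rewrite !big_ord_recl big_ord0 /F /bump /= subn0.
by congr (fun p : {poly int} => p`_j); ring.
Qed.

Lemma coef_array_perim_parts (F : nat -> nat -> nat) (f : seq nat -> nat) :
  (forall j n, F j n = count (fun s => f s == j) (partitions_perim n)) ->
  forall n j, coef_array F n j = (\sum_(s <- perim_parts n) 'X^(f s))`_j.
Proof.
move=> F_count [|n] j; first by rewrite big_nil coef0.
by rewrite /coef_array F_count -(permP (perm_perim_parts (ltn0Sn n))) coef_sum_Xn.
Qed.

Theorem mainTheorem4 :
  gf_identity (coef_array FD2) /\ gf_identity (coef_array FO2).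
Proof.
split.
- apply: (@gf_identity_of_recurrence _ (fun n => gfD_once n + gfD_rep n)).
  + by rewrite /gfD_once /gfD_rep !big_nil addr0.
  + by move=> n j; rewrite (@coef_array_perim_parts _ n_distinct_rep2) // (bigID top_once).
  + exact: gf_recurrence_once_rep (big_nil _ _ _ _) (big_nil _ _ _ _) gfD_once_rec gfD_rep_rec.
- apply: (@gf_identity_of_recurrence _ (fun n => gfO_even n + gfO_odd n)).
  + by rewrite /gfO_even /gfO_odd !big_nil addr0.
  + move=> n j; rewrite (@coef_array_perim_parts _ n_distinct_even) //.
    by rewrite (bigID (fun s => odd (head 0%N s))) addrC.
  + exact: gf_recurrence_parity (big_nil _ _ _ _) (big_nil _ _ _ _) (big_nil _ _ _ _)
      (big_nil _ _ _ _) gfO_even_rec gfO_odd_rec gfO_once_even_rec gfO_once_odd_rec.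
Qed.
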